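(* Let $D$ be a digraph with arc-strong connectivity $\ell=\lambda(D)$ and let $k\ge 2$ be an integer with $k\le \ell$. Then $\lambda_k(D)\ge\lfloor \ell/k\rfloor$.
   Context: Digraphs are finite, without loops or parallel arcs. $\lambda(D)$ is the arc-strong connectivity of $D$. For $S\subseteq V(D)$, $\lambda_S(D)$ is the maximum number of pairwise arc-disjoint strong subgraphs of $D$ containing $S$, and $\lambda_k(D)=\min\{\lambda_S(D): S\subseteq V(D), |S|=k\}$. *)

(* A digraph is a finite vertex type T with an arc relation
   A : rel T (no parallel arcs by construction; no loops = irreflexive A). *)
From mathcomp Require Import all_boot.
Set Implicit Arguments. Unset Strict Implicit. Unset Printing Implicit Defensive.

Section Digraphs.
Variable T : finType.

Definition arcset (A : rel T) : {set T * T} := [set a | A a.1 a.2].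

Definition arel (B : {set T * T}) : rel T := fun x y => (x, y) \in B.

Definition strong_digraph (A : rel T) : Prop :=
  forall u v : T, connect A u v.

Definition del_arcs (A : rel T) (X : {set T * T}) : rel T :=
  fun x y => A x y && ((x, y) \notin X).

Definition k_arc_strong (A : rel T) (k : nat) : Prop :=
  forall X : {set T * T}, X \subset arcset A -> #|X| < k ->
    strong_digraph (del_arcs A X).

Definition arc_strong_connectivity (A : rel T) (l : nat) : Prop :=
  k_arc_strong A l /\ ~ k_arc_strong A l.+1.

Definition subdigraph (A : rel T) (V : {set T}) (B : {set T * T}) : Prop :=
  B \subset arcset A /\ (forall a, a \in B -> (a.1 \in V) && (a.2 \in V)).

Definition strong_sub (V : {set T}) (B : {set T * T}) : Prop :=
  forall u v, u \in V -> v \in V -> connect (arel B) u v.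

Definition strong_sub_containing (A : rel T) (S V : {set T}) (B : {set T * T})
  : Prop := subdigraph A V B /\ strong_sub V B /\ S \subset V.

Definition lambdaS_ge (A : rel T) (S : {set T}) (m : nat) : Prop :=
  exists (V : 'I_m -> {set T}) (B : 'I_m -> {set T * T}),
    (forall i, strong_sub_containing A S (V i) (B i)) /\
    (forall i j, i != j -> [disjoint B i & B j]).

Definition lambdak_ge (A : rel T) (k m : nat) : Prop :=
  forall S : {set T}, #|S| = k -> lambdaS_ge A S m.

End Digraphs.

From mathcomp Require Import all_boot zify.
Set Implicit Arguments. Unset Strict Implicit. Unset Printing Implicit Defensive.

(* Edmonds' branching theorem, proved as Lovasz does: if every nonempty vertex
   set X is entered by at least as many arcs as there are roots (counted with
   multiplicity) outside X, then there are pairwise arc-disjoint out-branchings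
   spanning the digraph from the given roots.  A branching from the first root
   is grown one arc at a time, always leaving the minimal tight set not yet
   covered, which preserves the condition for the remaining roots; tight sets
   are closed under intersection by submodularity of the in-degree.
   In an l-arc-strong digraph every proper nonempty vertex set is entered by at
   least l arcs, so each vertex of the k-set S may serve as a root l/k times.
   Grouping the branchings into l/k blocks holding one branching per vertex of
   S, inside each block every vertex of S reaches every vertex, and the strong
   component of S in a block is a strong subgraph containing S. *)

Lemma sum_nat_bool_gt0 (I : finType) (A : {pred I}) (P : pred I) :
  0 < \sum_(i in A) P i -> exists2 i, i \in A & P i.
Proof.
rewrite lt0n sum_nat_eq0 => /forallPn[i]; rewrite negb_imply => /andP[iA].
by case Pi: (P i) => // _; exists i.
Qed.

Section Cuts.
Variable T : finType.
Implicit Types (R F : {set T * T}) (X Y Z N Q : {set T}) (s : seq T).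

Definition indeg R X : nat := \sum_(a in R) ((a.1 \notin X) && (a.2 \in X)).

Definition out_count s X : nat := count [predC X] s.

Definition cut_cond R s : Prop :=
  forall X, X != set0 -> out_count s X <= indeg R X.

Definition tight R s X : bool := indeg R X == out_count s X.

Lemma indegE R X :
  indeg R X = #|[set a in R | (a.1 \notin X) && (a.2 \in X)]|.
Proof.
rewrite /indeg -sum1_card big_mkcond [RHS]big_mkcond /=.
by apply: eq_bigr => a _; rewrite inE; case: (a \in R) => //=; case: (_ && _).
Qed.

Lemma indeg_setT R : indeg R setT = 0.
Proof. by rewrite /indeg big1 // => a _; rewrite inE. Qed.

Lemma out_count_setT s : out_count s setT = 0.
Proof. by rewrite /out_count; elim: s => //= x s ->; rewrite inE. Qed.

Lemma out_countS s X Y : X \subset Y -> out_count s Y <= out_count s X.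
Proof. by move=> /subsetP sXY; apply: sub_count => x /=; apply: contra; apply: sXY. Qed.

Lemma out_countIU s X Y :
  out_count s (X :&: Y) + out_count s (X :|: Y) = out_count s X + out_count s Y.
Proof.
rewrite /out_count; elim: s => //= x s IH; rewrite !inE.
by case: (x \in X); case: (x \in Y) => /=; lia.
Qed.

Lemma indegIU R X Y :
  indeg R (X :&: Y) + indeg R (X :|: Y) <= indeg R X + indeg R Y.
Proof.
rewrite /indeg -!big_split /=; apply: leq_sum => a _; rewrite !inE.
by case: (a.1 \in X); case: (a.1 \in Y); case: (a.2 \in X); case: (a.2 \in Y).
Qed.

Lemma indegD1 R a X : a \in R ->
  indeg R X = indeg (R :\ a) X + ((a.1 \notin X) && (a.2 \in X)).
Proof.
move=> aR; rewrite /indeg (bigD1 a) //= addnC; congr (_ + _).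
by apply: eq_bigl => b; rewrite !inE andbC.
Qed.

Lemma indeg_setD_out R F X : {in F, forall a, a.2 \notin X} ->
  indeg (R :\: F) X = indeg R X.
Proof.
move=> FX; rewrite /indeg [RHS](bigID (mem F)) /= [X in _ = X + _]big1.
  by rewrite add0n; apply: eq_bigl => a; rewrite !inE andbC.
by move=> a /andP[_ /FX /negbTE ->]; rewrite andbF.
Qed.

Lemma indeg_subset R Z N : Z \subset N ->
  indeg R Z <= indeg R N + \sum_(a in R) ((a.1 \in N :\: Z) && (a.2 \in Z)).
Proof.
move=> /subsetP ZN; rewrite /indeg -big_split /=; apply: leq_sum => a _.
rewrite !inE; have [/ZN -> | _] := boolP (a.2 \in Z); last by rewrite !andbF.
by case: (a.1 \in N); case: (a.1 \in Z).
Qed.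

Lemma tightI R s X Y : cut_cond R s -> X :&: Y != set0 ->
  tight R s X -> tight R s Y -> tight R s (X :&: Y).
Proof.
move=> cut XY0 /eqP tX /eqP tY; have XUY0 : X :|: Y != set0.
  case/set0Pn: XY0 => v; rewrite inE => /andP[vX _].
  by apply/set0Pn; exists v; rewrite inE vX.
have := cut _ XY0; have := cut _ XUY0; have := indegIU R X Y; have := out_countIU s X Y.
by rewrite /tight; lia.
Qed.

Lemma cut_cond_setD1 R s u v : cut_cond R s -> (u, v) \in R ->
  (forall X, X != set0 -> v \in X -> u \notin X -> ~~ tight R s X) ->
  cut_cond (R :\ (u, v)) s.
Proof.
move=> cut uvR notight X X0; have := cut X X0; have := notight X X0.
rewrite /tight (indegD1 X uvR) /=; set R' := R :\ (u, v).
have [vX|vX] := boolP (v \in X); have [uX|uX] := boolP (u \in X); rewrite /= ?addn0 //.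
by rewrite addn1 => /(_ isT isT)/eqP; lia.
Qed.

Lemma exists_safe_arc R s Q : cut_cond R s ->
  (forall Z, Z \subset ~: Q -> Z != set0 -> out_count s Z < indeg R Z) ->
  Q != setT ->
  exists u v, [/\ (u, v) \in R, u \in Q, v \notin Q & cut_cond (R :\ (u, v)) s].
Proof.
move=> cut outside QT.
(* [setT] is tight, so some minimal tight set [N] is not inside [Q]; an arc
   entering [N :\: Q] from [N :&: Q] is safe, since a tight set separating it
   would cut [N] down to a smaller such set. *)
pose P X := [&& X != set0, tight R s X & ~~ (X \subset Q)].
have PT : P setT.
  have TQ : ~~ (setT \subset Q) by rewrite subTset.
  have [v _ _] := subsetPn TQ.
  apply/and3P; split => //; first by apply/set0Pn; exists v.
  by rewrite /tight indeg_setT out_count_setT.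
have [N /and3P[N0 tightN NQ] minN] := arg_minnP (fun X => #|X|) PT.
set Z := N :\: Q; have ZN : Z \subset N := subsetDl N Q.
have : 0 < \sum_(a in R) ((a.1 \in N :\: Z) && (a.2 \in Z)).
  have := outside Z (subsetDr N Q); rewrite setD_eq0 => /(_ NQ).
  have := out_countS s ZN; have := indeg_subset R ZN; move/eqP: tightN; lia.
case/sum_nat_bool_gt0 => -[u v] uvR /andP[/= uNZ vZ].
have [vN vQ] : v \in N /\ v \notin Q by move: vZ; rewrite inE => /andP[].
have [uN uQ] : u \in N /\ u \in Q.
  by move: uNZ; rewrite !inE; case: (u \in Q); case: (u \in N).
exists u, v; split => //; apply: cut_cond_setD1 => // X X0 vX uX.
apply/negP => tightX.
have XN0 : X :&: N != set0 by apply/set0Pn; exists v; rewrite inE vX.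
have PXN : P (X :&: N).
  by rewrite /P XN0 tightI //=; apply/subsetPn; exists v; rewrite ?inE ?vX.
have XNN : X :&: N \proper N.
  by apply/properP; split; [exact: subsetIr | exists u; rewrite // inE (negbTE uX)].
by have := minN _ PXN; rewrite leqNgt proper_card.
Qed.

End Cuts.

Section Branchings.
Variable T : finType.
Implicit Types (B E F : {set T * T}) (Q Z : {set T}) (s : seq T).

Lemma connect_arelS E F x y :
  E \subset F -> connect (arel E) x y -> connect (arel F) x y.
Proof.
by move=> /subsetP EF; apply: connect_sub => u v uv; apply: connect1; apply: EF.
Qed.

Lemma cut_cond_outside B F s x0 Q : cut_cond B (x0 :: s) -> x0 \in Q ->
  {in F, forall a, a.2 \in Q} ->
  forall Z, Z \subset ~: Q -> Z != set0 -> out_count s Z < indeg (B :\: F) Z.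
Proof.
move=> cutB x0Q FQ Z /subsetP ZQ Z0.
have notQ y : y \in Q -> y \notin Z by move=> yQ; apply: contraL yQ => /ZQ; rewrite inE.
rewrite indeg_setD_out => [|a /FQ /notQ //].
by have := cutB Z Z0; rewrite /out_count /= notQ.
Qed.

Lemma grow_branching B x0 s : cut_cond B (x0 :: s) ->
  forall Q F, x0 \in Q -> F \subset B -> {in F, forall a, a.2 \in Q} ->
  {in Q, forall v, connect (arel F) x0 v} -> cut_cond (B :\: F) s ->
  exists2 F' : {set T * T}, F' \subset B &
    (forall v, connect (arel F') x0 v) /\ cut_cond (B :\: F') s.
Proof.
move=> cutB Q F; have [n] := ubnP #|~: Q|.
elim: n Q F => // n IH Q F ltQn x0Q FB FQ Freach cutF.
have [/eqP QT | QT] := boolP (Q == setT).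
  by exists F => //; split => // v; apply: Freach; rewrite QT inE.
have [u [v [uvR uQ vQ cutF']]] :=
  exists_safe_arc cutF (cut_cond_outside cutB x0Q FQ) QT.
move: uvR; rewrite inE => /andP[_ uvB].
apply: (IH (v |: Q) ((u, v) |: F)).
- have -> : ~: (v |: Q) = ~: Q :\ v by apply/setP => x; rewrite !inE negb_or andbC.
  by move: ltQn; rewrite (cardsD1 v (~: Q)) inE vQ.
- by rewrite in_setU1 x0Q orbT.
- by rewrite subUset sub1set uvB FB.
- by move=> a /setU1P[-> | /FQ aQ]; rewrite in_setU1 ?eqxx ?aQ ?orbT.
- move=> w /setU1P[-> | /Freach]; last exact: connect_arelS (subsetUr _ _).
  apply: connect_trans (connect_arelS (subsetUr _ _) (Freach u uQ)) _.
  by apply: connect1; rewrite /arel in_setU1 eqxx.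
- by rewrite setUC -setDDl.
Qed.

Theorem edmonds_branching B s : cut_cond B s ->
  exists F : nat -> {set T * T},
    [/\ forall i, F i \subset B,
        forall i j, i < size s -> j < size s -> i != j -> [disjoint F i & F j] &
        forall i x v, i < size s -> connect (arel (F i)) (nth x s i) v].
Proof.
elim: s B => [|x0 s IH] B cutB.
  by exists (fun=> set0); split => // i; rewrite sub0set.
have [F0 F0B [F0reach cutF0]] :
    exists2 F0 : {set T * T}, F0 \subset B &
      (forall v, connect (arel F0) x0 v) /\ cut_cond (B :\: F0) s.
  apply: (grow_branching cutB (set11 x0) (sub0set B)) => [a | v /set1P -> // |].
    by rewrite in_set0.
  by rewrite setD0 => X X0; apply: leq_trans (leq_addl _ _) (cutB X X0).
have [F [FB Fdisj Freach]] := IH _ cutF0.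
have F0disj i : [disjoint F i & F0].
  by rewrite disjoints_subset; apply: subset_trans (FB i) (subsetDr B F0).
exists (fun i => if i is i'.+1 then F i' else F0); split.
- by case=> [|i] //; apply: subset_trans (FB i) (subsetDl B F0).
- case=> [|i] [|j] //= lti ltj ij; first by rewrite disjoint_sym.
  exact: Fdisj.
- by case=> [|i] x v //= lti; apply: Freach.
Qed.

End Branchings.

Section StrongSubgraphs.
Variable T : finType.
Implicit Types (A : rel T) (E : {set T * T}) (S V X : {set T}).

Definition scc E x : {set T} :=
  [set y | connect (arel E) x y && connect (arel E) y x].

Definition induced E V : {set T * T} := [set a in E | (a.1 \in V) && (a.2 \in V)].

Lemma induced_sub E V : induced E V \subset E.
Proof. by rewrite /induced setIdE subsetIl. Qed.

Lemma strong_sub_scc E x : strong_sub (scc E x) (induced E (scc E x)).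
Proof.
move=> u v uC vC; have /connectP[p] : connect (arel E) u v.
  by move: uC vC; rewrite !inE => /andP[_ ux] /andP[xv _]; apply: connect_trans ux xv.
elim: p u uC => [|w p IH] u uC /=; first by move=> _ ->.
move=> /andP[uw pw] lastv; have wC : w \in scc E x.
  move: uC vC; rewrite !inE => /andP[xu _] /andP[_ vx].
  rewrite (connect_trans xu (connect1 uw)) /=; apply: connect_trans vx.
  by apply/connectP; exists p.
apply: connect_trans (IH w wC pw lastv).
by apply: connect1; rewrite /arel inE /= uC wC !andbT.
Qed.

Lemma connect_cross (e : rel T) X u v : connect e u v -> u \notin X -> v \in X ->
  exists x y, [/\ e x y, x \notin X & y \in X].
Proof.
move=> /connectP[p]; elim: p u => [|w p IH] u /=; first by move=> _ -> /negbTE ->.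
move=> /andP[uw pw] lastv uX vX; have [wX | wX] := boolP (w \in X).
  by exists u, w.
exact: IH pw lastv wX vX.
Qed.

Lemma k_arc_strong_indeg A l X : k_arc_strong A l -> X != set0 -> X != setT ->
  l <= indeg (arcset A) X.
Proof.
move=> Al X0 XT; rewrite leqNgt indegE; apply/negP => small.
set Y := [set a in arcset A | _] in small.
have YA : Y \subset arcset A by rewrite /Y setIdE subsetIl.
have /subsetPn[u _ uX] : ~~ (setT \subset X) by rewrite subTset.
have [v vX] := set0Pn _ X0.
have [x [y [/andP[Axy xyY] xX yX]]] := connect_cross (Al Y YA small u v) uX vX.
by move: xyY; rewrite !inE /= Axy xX yX.
Qed.

Lemma cut_cond_arc_strong A l s : k_arc_strong A l -> size s <= l ->
  cut_cond (arcset A) s.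
Proof.
move=> Al sl X X0; have [/eqP -> | XT] := boolP (X == setT).
  by rewrite out_count_setT.
exact: leq_trans (count_size _ _) (leq_trans sl (k_arc_strong_indeg Al X0 XT)).
Qed.

Lemma lambdaS_ge_of_spanning A S m y0 (F : 'I_m -> T -> {set T * T}) :
  y0 \in S -> (forall i y, F i y \subset arcset A) ->
  (forall i j y z, y \in S -> z \in S -> i != j -> [disjoint F i y & F j z]) ->
  (forall i y v, y \in S -> connect (arel (F i y)) y v) ->
  lambdaS_ge A S m.
Proof.
move=> Sy0 FA Fdisj Freach; pose B i := \bigcup_(y in S) F i y.
have reachB i y v : y \in S -> connect (arel (B i)) y v.
  by move=> Sy; apply: connect_arelS (Freach i y v Sy); apply: (bigcup_sup y Sy).
exists (fun i => scc (B i) y0), (fun i => induced (B i) (scc (B i) y0)); split.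
- move=> i; split; [split | split].
  + apply: subset_trans (induced_sub _ _) _; apply/bigcupsP => y _; exact: FA.
  + by move=> a; rewrite inE => /andP[].
  + exact: strong_sub_scc.
  + by apply/subsetP => y Sy; rewrite inE !reachB.
- move=> i j ij; apply: disjointWl (induced_sub _ _) _.
  apply: disjointWr (induced_sub _ _) _; apply/bigcup_disjointP => z Sz.
  rewrite disjoint_sym; apply/bigcup_disjointP => y Sy.
  by rewrite disjoint_sym; apply: Fdisj.
Qed.

End StrongSubgraphs.

Theorem proposition3p9 (T : finType) (A : rel T) (l k : nat) :
  irreflexive A ->
  arc_strong_connectivity A l ->
  2 <= k -> k <= l ->
  lambdak_ge A k (l %/ k).
Proof.
(* Loops enter no vertex set. *)
move=> _ [Al _] k2 _ S cardS; set m := l %/ k; set e := enum S.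
have k0 : 0 < k by apply: ltnW.
have [y0 Sy0] : exists y0, y0 \in S by apply/set0Pn; rewrite -card_gt0 cardS.
have idx y : y \in S -> index y e < k by rewrite -cardS cardE index_mem mem_enum.
(* Root number [i * k + j] is the [j]-th vertex of [S]. *)
pose s := mkseq (fun i => nth y0 e (i %% k)) (m * k).
have sl : size s <= l by rewrite size_mkseq leq_divM.
have [F [FA Fdisj Freach]] := edmonds_branching (cut_cond_arc_strong Al sl).
have lt_mk (i : 'I_m) j : j < k -> i * k + j < m * k.
  by have := ltn_ord i; nia.
apply: (lambdaS_ge_of_spanning (F := fun i y => F (i * k + index y e)) Sy0).
- by move=> i y; apply: FA.
- move=> i j y z Sy Sz ij; apply: Fdisj; rewrite ?size_mkseq ?lt_mk ?idx //.
  apply: contra ij => /eqP/(congr1 (divn^~ k)).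
  by rewrite /= !divnMDl // !divn_small ?idx // !addn0 => /val_inj ->.
- move=> i y v Sy; have := Freach (i * k + index y e) y0 v.
  rewrite size_mkseq nth_mkseq lt_mk ?idx // modnMDl modn_small ?idx //.
  by rewrite nth_index ?mem_enum //; apply.
Qed.
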